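(* Let $G$ be a graph that has an EPG-representation in a grid with $h$ rows in which every grid-edge is used by at most $c$ vertex-paths. Then the pathwidth of $G$ satisfies $pw(G)\le c(3h-1)-1$.
   Context: The $w\times h$-grid consists of all grid-points $(i,j)$ with integer coordinates $1\le i\le w$, $1\le j\le h$ (so it has $h$ rows), and all grid-edges joining grid-points at distance $1$. An EPG-representation of a graph $G$ assigns to each vertex $v$ a path $\mathrm{path}(v)$ in the grid such that $(v,w)$ is an edge of $G$ if and only if $\mathrm{path}(v)$ and $\mathrm{path}(w)$ share a grid-edge. The pathwidth $pw(G)$ is the smallest $k$ such that $G$ is a subgraph of a $(k+1)$-colourable interval graph (an interval graph is the intersection graph of a family of closed intervals of the real line). *)

From HB Require Import structures.
From mathcomp Require Import all_boot.
From Stdlib Require Reals.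
Set Implicit Arguments. Unset Strict Implicit. Unset Printing Implicit Defensive.

Definition simple_graph (T : finType) (e : rel T) : Prop :=
  symmetric e /\ irreflexive e.

Definition gpoint := (nat * nat)%type.

Definition in_grid (w h : nat) (p : gpoint) : bool :=
  [&& 0 < p.1, p.1 <= w, 0 < p.2 & p.2 <= h].

Definition gadj (p q : gpoint) : bool :=
  ((p.1 == q.1) && ((p.2 == q.2.+1) || (q.2 == p.2.+1))) ||
  ((p.2 == q.2) && ((p.1 == q.1.+1) || (q.1 == p.1.+1))).

Definition grid_edge (w h : nat) (a b : gpoint) : bool :=
  [&& in_grid w h a, in_grid w h b & gadj a b].

Definition grid_path (w h : nat) (s : seq gpoint) : bool :=
  match s with
  | [::] => false
  | x :: s' => [&& all (in_grid w h) s, uniq s & path gadj x s']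
  end.

Definition uses_edge (s : seq gpoint) (a b : gpoint) : bool :=
  ((a, b) \in zip s (behead s)) || ((b, a) \in zip s (behead s)).

Definition share_edge (s t : seq gpoint) : Prop :=
  exists a b : gpoint, uses_edge s a b /\ uses_edge t a b.

Definition EPG_rep (T : finType) (e : rel T) (w h : nat) (P : T -> seq gpoint) : Prop :=
  (forall v, grid_path w h (P v)) /\
  (forall v u, v != u -> (e v u <-> share_edge (P v) (P u))).

Definition edge_congestion_le (T : finType) (w h : nat) (P : T -> seq gpoint) (c : nat) : Prop :=
  forall a b, grid_edge w h a b -> #|[pred v | uses_edge (P v) a b]| <= c.

Definition intervals_meet (U : Type) (lo hi : U -> Reals.Rdefinitions.R) (u u' : U) : Prop :=
  Reals.Rdefinitions.Rle (lo u) (hi u') /\ Reals.Rdefinitions.Rle (lo u') (hi u).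

Definition subgraph_of_colourable_interval_graph (T : finType) (e : rel T) (n : nat) : Prop :=
  exists (U : finType) (lo hi : U -> Reals.Rdefinitions.R) (col : U -> 'I_n) (phi : T -> U),
    (forall u, Reals.Rdefinitions.Rle (lo u) (hi u)) /\
    (forall u u', u != u' -> intervals_meet lo hi u u' -> col u != col u') /\
    injective phi /\
    (forall x y, e x y -> phi x != phi y /\ intervals_meet lo hi (phi x) (phi y)).

(* pw(G) <= k  iff  G is a subgraph of a (k+1)-colourable interval graph
   (the property is monotone in k); stated with n = k+1 colours. *)
Definition pathwidth_le_colours (T : finType) (e : rel T) (n : nat) : Prop :=
  subgraph_of_colourable_interval_graph e n.

From HB Require Import structures.
From mathcomp Require Import all_boot zify.
From Stdlib Require Reals.
Set Implicit Arguments. Unset Strict Implicit. Unset Printing Implicit Defensive.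

(* Project every vertex-path onto the horizontal axis: it becomes the interval
   between its leftmost and rightmost column.  Paths sharing a grid-edge share a
   column, so G is a subgraph of the intersection graph of these intervals.  A
   path whose interval contains column p moves one column at a time, so it visits
   column p and uses one of the 3h-1 grid-edges having an end in column p; each of
   them is used by at most c paths.  Hence at most c(3h-1) intervals contain the
   left end of any interval, and colouring greedily from left to right uses at
   most c(3h-1) colours.  Single-point paths use no grid-edge; they are isolated
   and receive private intervals to the right of the grid. *)

Lemma foldr_minn_le d (s : seq nat) x : x \in s -> foldr minn d s <= x.
Proof.
elim: s => [|y s IH] //=; rewrite inE => /orP[/eqP->|/IH]; first exact: geq_minl.
exact: leq_trans (geq_minr _ _).
Qed.

Lemma foldr_minn_mem d (s : seq nat) : foldr minn d s \in d :: s.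
Proof.
elim: s => [|y s IH] /=; first exact: mem_head.
rewrite /minn; case: ifP => _; first by rewrite !inE eqxx orbT.
by move: IH; rewrite !inE => /orP[->|->]; rewrite ?orbT.
Qed.

Lemma foldr_maxn_ge d (s : seq nat) x : x \in s -> x <= foldr maxn d s.
Proof.
elim: s => [|y s IH] //=; rewrite inE => /orP[/eqP->|/IH]; first exact: leq_maxl.
by move/leq_trans; apply; apply: leq_maxr.
Qed.

Lemma foldr_maxn_mem d (s : seq nat) : foldr maxn d s \in d :: s.
Proof.
elim: s => [|y s IH] /=; first exact: mem_head.
rewrite /maxn; case: ifP => _; last by rewrite !inE eqxx orbT.
by move: IH; rewrite !inE => /orP[->|->]; rewrite ?orbT.
Qed.

Definition min_col (s : seq gpoint) : nat :=
  foldr minn (head 0 (map fst s)) (map fst s).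

Definition max_col (s : seq gpoint) : nat :=
  foldr maxn (head 0 (map fst s)) (map fst s).

Lemma min_col_le s a : a \in s -> min_col s <= a.1.
Proof. by move=> a_s; apply/foldr_minn_le/map_f. Qed.

Lemma max_col_ge s a : a \in s -> a.1 <= max_col s.
Proof. by move=> a_s; apply/foldr_maxn_ge/map_f. Qed.

Lemma min_col_mem s : s != [::] -> exists2 a, a \in s & a.1 = min_col s.
Proof.
case: s => [|x s] // _.
have := foldr_minn_mem (head 0 (map fst (x :: s))) (map fst (x :: s)).
rewrite -/(min_col _) inE => /orP[/eqP ->|/mapP[a a_s ->]]; last by exists a.
by exists x; rewrite ?mem_head.
Qed.

Lemma max_col_mem s : s != [::] -> exists2 a, a \in s & a.1 = max_col s.
Proof.
case: s => [|x s] // _.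
have := foldr_maxn_mem (head 0 (map fst (x :: s))) (map fst (x :: s)).
rewrite -/(max_col _) inE => /orP[/eqP ->|/mapP[a a_s ->]]; last by exists a.
by exists x; rewrite ?mem_head.
Qed.

Lemma path_nat_ivt (X : eqType) (r : rel X) (f : X -> nat) x s n :
  (forall y z, r y z -> f z <= (f y).+1 /\ f y <= (f z).+1) -> path r x s ->
  (exists2 a, a \in x :: s & f a <= n) -> (exists2 b, b \in x :: s & n <= f b) ->
  exists2 c, c \in x :: s & f c = n.
Proof.
move=> f_step; elim: s x => [|y s IH] x /=.
  move=> _ [a] /[!inE] /eqP -> fa [b] /[!inE] /eqP -> fb.
  by exists x; rewrite ?mem_head //; lia.
move=> /andP[rxy r_s] [a a_xs fa] [b b_xs fb].
have [fx_n|fx_n|<-] := ltngtP (f x) n; last by exists x; rewrite ?mem_head.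
all: have [fy_le fx_le] := f_step _ _ rxy.
all: suff [c c_ys fc] : exists2 c, c \in y :: s & f c = n
       by exists c; rewrite // inE c_ys orbT.
- apply: IH => //; first by exists y; rewrite ?mem_head //; lia.
  by exists b => //; move: b_xs; rewrite inE => /orP[/eqP b_x|//]; subst b; lia.
- apply: IH => //; last by exists y; rewrite ?mem_head //; lia.
  by exists a => //; move: a_xs; rewrite inE => /orP[/eqP a_x|//]; subst a; lia.
Qed.

Lemma mem_zip_path (X : eqType) (r : rel X) x s a b :
  path r x s -> (a, b) \in zip (x :: s) s -> [/\ r a b, a \in x :: s & b \in x :: s].
Proof.
elim: s x => [|y s IH] x // /andP[rxy r_s].
rewrite [zip _ _]/= inE => /orP[/eqP[-> ->]|/(IH y r_s) [rab a_ys b_ys]].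
  by rewrite !inE !eqxx orbT.
by split => //; apply/orP; right.
Qed.

Lemma gadj_sym : symmetric gadj.
Proof. by case=> [a b] [c d]; rewrite /gadj /=; apply/idP/idP; lia. Qed.

Lemma gadj_col_step p q : gadj p q -> q.1 <= p.1.+1 /\ p.1 <= q.1.+1.
Proof. by case: p q => [a b] [c d]; rewrite /gadj /=; lia. Qed.

Lemma uses_edge_sym s a b : uses_edge s a b = uses_edge s b a.
Proof. exact: orbC. Qed.

Lemma uses_edge_size s a b : uses_edge s a b -> 1 < size s.
Proof. by case: s => [|x [|y s]]. Qed.

Lemma uses_edge_cons x s a b : uses_edge s a b -> uses_edge (x :: s) a b.
Proof.
case: s => [|y s] //; rewrite /uses_edge [zip (x :: _) _]/= !(in_cons (x, y)).
by case/orP => ->; rewrite !orbT.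
Qed.

Lemma uses_edge_at (s : seq gpoint) x : 1 < size s -> x \in s -> exists y, uses_edge s x y.
Proof.
elim: s => [|a [|b t] IH] //= _; rewrite in_cons => /orP[/eqP->|x_bt].
  by exists b; rewrite /uses_edge [zip _ _]/= mem_head.
case: t IH x_bt => [|d t] IH.
  by rewrite mem_seq1 => /eqP->; exists a; rewrite /uses_edge [zip _ _]/= mem_head orbT.
by move=> /(IH isT) [y y_x]; exists y; apply: uses_edge_cons.
Qed.

Lemma grid_path_mem w h s a : grid_path w h s -> a \in s -> in_grid w h a.
Proof. by case: s => [|x s] // /and3P[/allP s_grid _ _] /s_grid. Qed.

Lemma grid_path_uses_edge w h s a b :
  grid_path w h s -> uses_edge s a b -> [/\ gadj a b, a \in s & b \in s].
Proof.
case: s => [|x s] // s_path; have /and3P[_ _ x_s] := s_path.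
by case/orP => /(mem_zip_path x_s) [ab a_s b_s]; rewrite // gadj_sym.
Qed.

Lemma grid_path_uses_grid_edge w h s a b :
  grid_path w h s -> uses_edge s a b -> grid_edge w h a b.
Proof.
move=> s_path /(grid_path_uses_edge s_path) [ab a_s b_s].
by rewrite /grid_edge (grid_path_mem s_path a_s) (grid_path_mem s_path b_s).
Qed.

Definition column_window (h p : nat) : seq (gpoint * gpoint) :=
  [seq ((p.-1, j), (p, j)) | j <- iota 1 h] ++
  [seq ((p, j), (p.+1, j)) | j <- iota 1 h] ++
  [seq ((p, j), (p, j.+1)) | j <- iota 1 h.-1].

Lemma size_column_window h p : 0 < h -> size (column_window h p) = 3 * h - 1.
Proof. by move=> h_gt0; rewrite !size_cat !size_map !size_iota; lia. Qed.

Lemma uses_edge_column_window w h s q r :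
  grid_edge w h q r -> uses_edge s q r ->
  exists2 e, e \in column_window h q.1 & uses_edge s e.1 e.2.
Proof.
case: q r => [q1 q2] [r1 r2] /and3P[]; rewrite /in_grid /gadj /= => q_grid r_grid.
move=> /orP[] /andP[/eqP E /orP[] /eqP F] qr; subst.
- exists ((r1, r2), (r1, r2.+1)); last by rewrite uses_edge_sym.
  by rewrite !mem_cat (map_f (fun j => ((r1, j), (r1, j.+1)))) ?orbT // mem_iota; lia.
- exists ((r1, q2), (r1, q2.+1)) => //.
  by rewrite !mem_cat (map_f (fun j => ((r1, j), (r1, j.+1)))) ?orbT // mem_iota; lia.
- exists ((r1, r2), (r1.+1, r2)); last by rewrite uses_edge_sym.
  by rewrite !mem_cat (map_f (fun j => ((r1.+1.-1, j), (r1.+1, j)))) // mem_iota; lia.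
- exists ((q1, r2), (q1.+1, r2)) => //.
  by rewrite !mem_cat (map_f (fun j => ((q1, j), (q1.+1, j)))) ?orbT // mem_iota; lia.
Qed.

Lemma card_has_le (T : finType) (X : Type) (f : T -> X -> bool) (E : seq X) c :
  (forall x, #|[pred v | f v x]| <= c) -> #|[pred v | has (f v) E]| <= c * size E.
Proof.
move=> f_le; elim: E => [|x E IH] /=.
  by rewrite muln0 leqn0; apply/eqP/eq_card0.
rewrite mulnS (@eq_card _ _ [predU [pred v | f v x] & [pred v | has (f v) E]]) //.
by apply: leq_trans (leq_add (f_le x) IH); rewrite -cardUI leq_addr.
Qed.

Lemma free_colour (X : finType) k (col : X -> 'I_k) (N : {set X}) :
  #|N| < k -> exists c : 'I_k, c \notin col @: N.
Proof.
move=> N_lt; case: (pickP [pred c | c \notin col @: N]) => [c c_free|all_used].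
  by exists c.
have /subset_leq_card : [set: 'I_k] \subset col @: N.
  by apply/subsetP => c _; apply/negbNE/negbT/all_used.
rewrite cardsT card_ord => /(leq_trans)/(_ (leq_imset_card _ _)).
by rewrite leqNgt N_lt.
Qed.

Section GreedyIntervalColouring.

Variables (U : finType) (lo hi : U -> nat) (k : nat).
Hypothesis k_gt0 : 0 < k.
Hypothesis lo_hi : forall u, lo u <= hi u.
Hypothesis ply_le : forall u, #|[pred u' | lo u' <= lo u <= hi u']| <= k.

Definition proper_on (S : {set U}) (col : U -> 'I_k) : Prop :=
  {in S &, forall u u', u != u' -> lo u <= hi u' -> lo u' <= hi u -> col u != col u'}.

(* Colour greedily by increasing left ends: when an interval is coloured, its
   coloured neighbours all contain its left end, so fewer than k are blocking. *)
Lemma proper_on_extend (S : {set U}) u col :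
  u \in S -> {in S, forall v, lo v <= lo u} -> proper_on (S :\ u) col ->
  exists col', proper_on S col'.
Proof.
move=> uS u_max col_ok.
pose N := [set v in S :\ u | (lo u <= hi v) && (lo v <= hi u)].
have N_lt : #|N| < k.
  have /subset_leq_card : u |: N \subset [pred v | lo v <= lo u <= hi v].
    apply/subsetP => v; rewrite !inE => /orP[/eqP->|]; first by rewrite leqnn lo_hi.
    by case/and3P => /andP[_ vS] uv _; rewrite uv andbT; apply: u_max.
  by rewrite cardsU1 !inE eqxx add1n => /leq_trans; apply; apply: ply_le.
have [c0 c0_free] := free_colour col N_lt.
exists (fun x => if x == u then c0 else col x) => x y xS yS xy lo_x lo_y.
have free_at v : v \in S -> v != u -> lo u <= hi v -> lo v <= hi u -> c0 != col v.
  move=> vS vu uv vu'; apply: contraNneq c0_free => ->.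
  by apply: imset_f; rewrite !inE vu vS uv vu'.
have [x_u|xu] := eqVneq x u; have [y_u|yu] := eqVneq y u.
- by rewrite x_u y_u eqxx in xy.
- by subst x; apply: free_at.
- by subst y; rewrite eq_sym; apply: free_at.
- by apply: col_ok; rewrite // !inE ?xu ?yu.
Qed.

Lemma proper_on_exists (S : {set U}) : exists col, proper_on S col.
Proof.
elim: {S}_.+1 {-2}S (ltnSn #|S|) => // n IH S S_le.
have [->|[u0 u0S]] := set_0Vmem S.
  by exists (fun=> Ordinal k_gt0) => u u'; rewrite in_set0.
have [u uS u_max] : exists2 u, u \in S & {in S, forall v, lo v <= lo u}.
  by case: (arg_maxnP lo u0S) => u; exists u.
have [col col_ok] : exists col, proper_on (S :\ u) col.
  by apply: IH; move: S_le; rewrite (cardsD1 u S) uS add1n ltnS.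
exact: proper_on_extend col_ok.
Qed.

Lemma greedy_interval_colouring : exists col : U -> 'I_k,
  forall u u', u != u' -> lo u <= hi u' -> lo u' <= hi u -> col u != col u'.
Proof.
have [col col_ok] := proper_on_exists [set: U].
by exists col => u u'; apply: col_ok; rewrite in_setT.
Qed.

End GreedyIntervalColouring.

Section ColumnIntervals.

Variables (T : finType) (w h : nat) (P : T -> seq gpoint).
Hypothesis P_grid : forall v, grid_path w h (P v).

Definition nontrivial v := 1 < size (P v).

(* Paths without a grid-edge get pairwise distinct one-point intervals to the
   right of the grid. *)
Definition lo v := if nontrivial v then min_col (P v) else w.+1 + enum_rank v.
Definition hi v := if nontrivial v then max_col (P v) else w.+1 + enum_rank v.

Lemma nontrivial_neq_nil v : nontrivial v -> P v != [::].
Proof. by rewrite /nontrivial; case: (P v). Qed.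

Lemma mem_column_interval v a : nontrivial v -> a \in P v -> lo v <= a.1 <= hi v.
Proof. by move=> v_nt a_v; rewrite /lo /hi v_nt min_col_le ?max_col_ge. Qed.

Lemma lo_mem v : nontrivial v -> exists2 a, a \in P v & a.1 = lo v.
Proof. by move=> v_nt; rewrite /lo v_nt; apply/min_col_mem/nontrivial_neq_nil. Qed.

Lemma hi_mem v : nontrivial v -> exists2 a, a \in P v & a.1 = hi v.
Proof. by move=> v_nt; rewrite /hi v_nt; apply/max_col_mem/nontrivial_neq_nil. Qed.

Lemma lo_le_hi v : lo v <= hi v.
Proof.
case v_nt : (nontrivial v); last by rewrite /lo /hi v_nt.
by have [a a_v _] := lo_mem v_nt; case/andP: (mem_column_interval v_nt a_v); apply: leq_trans.
Qed.

Lemma hi_le_width v : nontrivial v -> hi v <= w.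
Proof.
by move=> v_nt; have [a /(grid_path_mem (P_grid v)) /and4P[_ ? _ _] <-] := hi_mem v_nt.
Qed.

Lemma trivial_interval_private u v : ~~ nontrivial u -> lo v <= lo u <= hi v -> v = u.
Proof.
move=> u_t; case v_nt : (nontrivial v).
  by have := hi_le_width v_nt; rewrite /lo (negbTE u_t); lia.
rewrite /lo /hi (negbTE u_t) v_nt -eqn_leq eqn_add2l => /eqP rank_eq.
exact/enum_rank_inj/val_inj.
Qed.

Lemma visits_column v p : nontrivial v -> lo v <= p <= hi v ->
  exists2 q, q \in P v & q.1 = p.
Proof.
move=> v_nt /andP[lo_p p_hi].
have [a a_v a_lo] := lo_mem v_nt; have [b b_v b_hi] := hi_mem v_nt.
move: (P_grid v) a_v b_v; case: (P v) => [|x s] // /and3P[_ _ x_s] a_v b_v.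
apply: (path_nat_ivt (f := fst) gadj_col_step x_s).
  by exists a; rewrite ?a_lo.
by exists b; rewrite ?b_hi.
Qed.

Lemma uses_column_window v p : nontrivial v -> lo v <= p <= hi v ->
  has (fun e => uses_edge (P v) e.1 e.2) (column_window h p).
Proof.
move=> v_nt /(visits_column v_nt) [q q_v <-].
have [r qr] := uses_edge_at v_nt q_v.
have q_r := grid_path_uses_grid_edge (P_grid v) qr.
by have [e e_win e_used] := uses_edge_column_window q_r qr; apply/hasP; exists e.
Qed.

Lemma share_edge_intervals_meet u v :
  share_edge (P u) (P v) -> lo u <= hi v /\ lo v <= hi u.
Proof.
move=> [a [b [u_ab v_ab]]].
have [_ a_u _] := grid_path_uses_edge (P_grid u) u_ab.
have [_ a_v _] := grid_path_uses_edge (P_grid v) v_ab.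
have /andP[lo_u u_hi] := mem_column_interval (uses_edge_size u_ab) a_u.
have /andP[lo_v v_hi] := mem_column_interval (uses_edge_size v_ab) a_v.
by split; apply: leq_trans; eassumption.
Qed.

Variable c : nat.
Hypothesis P_congestion : edge_congestion_le w h P c.

Lemma card_uses_edge_le a b : #|[pred v | uses_edge (P v) a b]| <= c.
Proof.
case: (pickP [pred v | uses_edge (P v) a b]) => [v v_ab|none]; last by rewrite eq_card0.
exact/P_congestion/(grid_path_uses_grid_edge (P_grid v) v_ab).
Qed.

Lemma column_interval_ply u : 0 < h -> 0 < c ->
  #|[pred v | lo v <= lo u <= hi v]| <= c * (3 * h - 1).
Proof.
move=> h_gt0 c_gt0; case u_nt : (nontrivial u); last first.
  rewrite (@eq_card _ _ (pred1 u)) ?card1 ?muln_gt0 ?c_gt0 /=; first lia.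
  move=> v; apply/idP/eqP => [/(trivial_interval_private (negbT u_nt))|->] //.
  by rewrite inE leqnn lo_le_hi.
rewrite -(size_column_window (lo u) h_gt0).
apply: leq_trans (card_has_le (f := fun v e => uses_edge (P v) e.1 e.2) _
  (fun e => card_uses_edge_le e.1 e.2)).
apply/subset_leq_card/subsetP => v; rewrite !inE => lo_v_hi.
case v_nt : (nontrivial v); first exact: uses_column_window v_nt lo_v_hi.
have := hi_le_width u_nt; have := lo_le_hi u; move: lo_v_hi.
by rewrite /lo /hi u_nt v_nt; lia.
Qed.

End ColumnIntervals.

Theorem theorem6 (T : finType) (e : rel T) (w h c : nat) (P : T -> seq gpoint) :
  simple_graph e -> 0 < h -> 0 < c ->
  EPG_rep e w h P -> edge_congestion_le w h P c ->
  pathwidth_le_colours e (c * (3 * h - 1)).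
Proof.
move=> [_ e_irr] h_gt0 c_gt0 [P_grid P_epg] P_congestion.
have k_gt0 : 0 < c * (3 * h - 1) by rewrite muln_gt0 c_gt0; lia.
have [col col_proper] := greedy_interval_colouring k_gt0 (lo_le_hi w P)
  (fun u => column_interval_ply P_grid P_congestion u h_gt0 c_gt0).
exists T, (Raxioms.INR \o lo w P), (Raxioms.INR \o hi w P), col, id.
split; [|split; [|split]] => //.
- by move=> u; apply/RIneq.le_INR/leP/lo_le_hi.
- by move=> u v uv [/RIneq.INR_le/leP lo_u /RIneq.INR_le/leP lo_v]; apply: col_proper.
- move=> x y xy; have x_y : x != y by apply: contraTneq xy => ->; rewrite e_irr.
  have [lo_x lo_y] := share_edge_intervals_meet P_grid ((P_epg x y x_y).1 xy).
  by split => //; split; apply/RIneq.le_INR/leP.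
Qed.
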